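(* Let $E^3=\{000,011,101,110\}$ and fix $u=u_1u_2u_3\in E^3$. Let $n\ge 1$. Alice, Bob and Carol receive $X=(x_1,\dots,x_n)$, $Y=(y_1,\dots,y_n)$, $Z=(z_1,\dots,z_n)\in\{0,1\}^n$ respectively, under the promise that $x_iy_iz_i\in E^3$ (i.e. $x_i\oplus y_i\oplus z_i=0$) for every $1\le i\le n$. Define $f_u(X,Y,Z)=\bigoplus_{i=1}^n t_u(x_iy_iz_i)$, where $t_u(w)=1$ if $w=u$ and $t_u(w)=0$ otherwise. Suppose the three parties share $n$ copies of the three-qubit state $|\psi_3\rangle=\frac12(|000\rangle-|011\rangle-|101\rangle-|110\rangle)$, the first, second and third qubit of the $i$-th copy being held by Alice, Bob and Carol respectively. Then there is a protocol computing $f_u$ in which the only quantum operations are the following: for each $i$, each party applies to its qubit of the $i$-th copy the Hadamard gate $H$ if its $i$-th input bit differs from the corresponding bit of $u$ and the identity $I$ otherwise (so that the three-qubit operation on the $i$-th copy is $III$, $IHH$, $HIH$, $HHI$ according as $u\oplus x_iy_iz_i$ equals $000,011,101,110$), followed by a measurement of each qubit in the computational basis; after local classical computation, Bob and Carol each send one classical bit to Alice (two classical bits in total), and Alice then outputs $f_u(X,Y,Z)$ correctly for every input satisfying the promise.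
   Context: $H$ denotes the one-qubit Hadamard gate $H|0\rangle=(|0\rangle+|1\rangle)/\sqrt2$, $H|1\rangle=(|0\rangle-|1\rangle)/\sqrt2$, and $I$ the identity. A three-letter word such as $IHH$ denotes the tensor product of the listed one-qubit operations applied to the first, second and third qubit respectively. In the communication model, parties may perform arbitrary local operations on their own qubits and classical data, but communicate only by sending classical bits to Alice; no quantum communication is allowed. *)

From mathcomp Require Import all_boot all_order all_algebra all_field.
Set Implicit Arguments. Unset Strict Implicit. Unset Printing Implicit Defensive.
Import Order.TTheory GRing.Theory Num.Theory.
Local Open Scope ring_scope.

(** Computational basis of one qubit is indexed by bool (false = |0>, true = |1>). *)

(** One-qubit gate applied by a party: [false] = identity I, [true] = Hadamard H.
    [gate g a x] is the matrix entry <a| G |x>. *)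
Definition hadamard (a x : bool) : algC :=
  (if a && x then -1 else 1) / sqrtC 2%:R.
Definition identity_gate (a x : bool) : algC := if a == x then 1 else 0.
Definition gate (g : bool) : bool -> bool -> algC :=
  if g then hadamard else identity_gate.

Definition psi3 (x y z : bool) : algC :=
  if [&& ~~ x, ~~ y & ~~ z] then 2%:R^-1
  else if x (+) y (+) z then 0 else - 2%:R^-1.

(** Amplitude of measurement outcome |a b c> after applying the local gates
    g1 (x) g2 (x) g3 to |psi_3>:  <abc| G1 (x) G2 (x) G3 |psi_3>. *)
Definition amp3 (g1 g2 g3 a b c : bool) : algC :=
  \sum_(x : bool) \sum_(y : bool) \sum_(z : bool)
     gate g1 a x * gate g2 b y * gate g3 c z * psi3 x y z.

Definition inE3 (w1 w2 w3 : bool) : bool := ~~ (w1 (+) w2 (+) w3).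

Definition f_u (u1 u2 u3 : bool) n (X Y Z : 'I_n -> bool) : bool :=
  \big[addb/false]_(i < n) [&& X i == u1, Y i == u2 & Z i == u3].

(** Since the shared state is the n-fold tensor product
    of |psi_3> and the operations act copywise, this is the product of the
    per-copy amplitudes. *)
Definition joint_amp (u1 u2 u3 : bool) n (X Y Z A B C : 'I_n -> bool) : algC :=
  \prod_(i < n) amp3 (X i != u1) (Y i != u2) (Z i != u3) (A i) (B i) (C i).

Definition joint_prob (u1 u2 u3 : bool) n (X Y Z A B C : 'I_n -> bool) : algC :=
  `|joint_amp u1 u2 u3 X Y Z A B C| ^+ 2.

(** Each copy of |psi_3> is supported on even-weight strings, and applying
    two Hadamards to it yields a state supported on odd-weight strings.  Hence
    on copy i the parity of the three measured bits is 0 exactly when no party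
    applied H, i.e. exactly when x_i y_i z_i = u; so t_u on copy i is the
    complemented outcome parity, and f_u is the XOR of Alice's complemented
    outcomes with the parities Bob and Carol send. *)
From mathcomp Require Import all_boot all_order all_algebra all_field ring.
Set Implicit Arguments.
Unset Strict Implicit.
Unset Printing Implicit Defensive.

Import Order.TTheory GRing.Theory Num.Theory.
Local Open Scope ring_scope.

Definition parity n (s : 'I_n -> bool) : bool := \big[addb/false]_(i < n) s i.

Lemma parity_addb n (s t : 'I_n -> bool) :
  parity (fun i => s i (+) t i) = parity s (+) parity t.
Proof. exact: big_split. Qed.

Lemma inE3_addb (x1 x2 x3 u1 u2 u3 : bool) :
  inE3 x1 x2 x3 -> inE3 u1 u2 u3 -> inE3 (x1 != u1) (x2 != u2) (x3 != u3).
Proof. by case: x1 x2 x3 u1 u2 u3 => [] [] [] [] [] []. Qed.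

Lemma amp3_eq0 (g1 g2 g3 a b c : bool) : inE3 g1 g2 g3 ->
  a (+) b (+) c != [|| g1, g2 | g3] -> amp3 g1 g2 g3 a b c = 0.
Proof.
rewrite /amp3 !big_bool /gate /hadamard /identity_gate /psi3.
by case: g1 g2 g3 a b c => [] [] [] [] [] [] //= _ _;
  rewrite ?mulr0 ?mul0r ?addr0 ?add0r ?mulr1 ?mul1r //; ring.
Qed.

Lemma amp3_neq0_parity (g1 g2 g3 a b c : bool) : inE3 g1 g2 g3 ->
  amp3 g1 g2 g3 a b c != 0 -> a (+) b (+) c = [|| g1, g2 | g3].
Proof. by move=> g_E3; apply: contraNeq => /(amp3_eq0 g_E3)->. Qed.

Lemma indicator_outcome_parity (u1 u2 u3 x1 x2 x3 a b c : bool) :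
  inE3 u1 u2 u3 -> inE3 x1 x2 x3 ->
  amp3 (x1 != u1) (x2 != u2) (x3 != u3) a b c != 0 ->
  [&& x1 == u1, x2 == u2 & x3 == u3] = ~~ a (+) b (+) c.
Proof.
move=> u_E3 x_E3 /(amp3_neq0_parity (inE3_addb x_E3 u_E3)).
by rewrite !addNb => ->; rewrite !negb_or !negbK.
Qed.

Lemma joint_prob_gt0_amp3 (u1 u2 u3 : bool) n (X Y Z A B C : 'I_n -> bool) :
  0 < joint_prob u1 u2 u3 X Y Z A B C ->
  forall i, amp3 (X i != u1) (Y i != u2) (Z i != u3) (A i) (B i) (C i) != 0.
Proof.
move=> p_gt0 i; have : joint_amp u1 u2 u3 X Y Z A B C != 0.
  by apply: contraTneq p_gt0; rewrite /joint_prob => ->; rewrite normr0 expr0n ltxx.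
by rewrite prodf_seq_neq0 => /allP /(_ i (mem_index_enum _)).
Qed.

Theorem theorem1 (u1 u2 u3 : bool) (n : nat) :
  inE3 u1 u2 u3 -> (1 <= n)%N ->
  exists (msgB : ('I_n -> bool) -> ('I_n -> bool) -> bool)
         (msgC : ('I_n -> bool) -> ('I_n -> bool) -> bool)
         (out  : ('I_n -> bool) -> ('I_n -> bool) -> bool -> bool -> bool),
    forall X Y Z : 'I_n -> bool,
      (forall i, inE3 (X i) (Y i) (Z i)) ->
      forall A B C : 'I_n -> bool,
        0 < joint_prob u1 u2 u3 X Y Z A B C ->
        out X A (msgB Y B) (msgC Z C) = f_u u1 u2 u3 X Y Z.
Proof.
move=> u_E3 _.
exists (fun _ B => parity B), (fun _ C => parity C).
exists (fun _ A mB mC => parity (fun i => ~~ A i) (+) mB (+) mC).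
move=> X Y Z XYZ_E3 A B C p_gt0.
rewrite -!parity_addb; apply: eq_bigr => i _; symmetry.
exact: indicator_outcome_parity (XYZ_E3 i) (joint_prob_gt0_amp3 p_gt0 i).
Qed.
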